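(* Let $K$ be a field, $G=\mathbb Z$, $\widehat G=2\mathbb Z$. If $t\in\mathbb Z$ is even, every $2\mathbb Z$-periodic Leibniz algebra $L(f,t)$ is isomorphic to one of $L_{\bar 0 1}(\alpha,t)$ ($\alpha\in\{0,1\}$), $L_{\bar 0 2}(t)$, $L_{\bar 0 3}(t)$. If $t$ is odd, every $2\mathbb Z$-periodic Leibniz algebra $L(f,t)$ is isomorphic to one of $L_{\bar 1 1}(\alpha,t)$ ($\alpha\in\{0,1\}$), $L_{\bar 1 2}(t)$, $L_{\bar 1 3}(t)$.
   Context: For $t\in\mathbb Z$ and $f:\mathbb Z\times\mathbb Z\to K$, $L(f,t)$ is the $K$-algebra with basis $\{e_a:a\in\mathbb Z\}$ and multiplication $e_ae_b=f(a,b)e_{a+b+t}$; it is $2\mathbb Z$-periodic if $f(a,b)$ depends only on the parities of $a$ and $b$, and a Leibniz algebra if $x(yz)=(xy)z-(xz)y$ for all $x,y,z$. The following algebras are of the form $L(f,t)$ with $f$ given by: $L_{\bar 0 1}(\alpha,t)$: $f(a,b)=\alpha$ if $a$ odd and $b$ even, $0$ otherwise (i.e. $e_{2k-1}e_{2m}=\alpha e_{2(k+m)-1+t}$); $L_{\bar 0 2}(t)$ and $L_{\bar 1 2}(t)$: $f(a,b)=-1$ if $a$ even and $b$ odd, $f(a,b)=1$ if $a$ odd and $b$ even, $0$ otherwise; $L_{\bar 0 3}(t)$: $f(a,b)=1$ if $a,b$ both odd, $0$ otherwise; $L_{\bar 1 1}(\alpha,t)$: $f(a,b)=\alpha$ if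 $a$ even and $b$ odd, $0$ otherwise; $L_{\bar 1 3}(t)$: $f(a,b)=1$ if $a,b$ both even, $0$ otherwise. *)

From HB Require Import structures.
From mathcomp Require Import all_boot all_order all_algebra.
Set Implicit Arguments. Unset Strict Implicit. Unset Printing Implicit Defensive.
Import Order.TTheory GRing.Theory Num.Theory.
Local Open Scope ring_scope.

(* The underlying vector space of L(f,t): the K-vector space with basis
   {e_a : a in Z}.  An element is represented by a formal finite sum
   given as a list [:: (a1,k1); ...; (an,kn)] standing for
   k1 e_{a1} + ... + kn e_{an}.  Two representations denote the same
   element iff they have the same coefficients ([veq]). *)
Definition vec (K : fieldType) := seq (int * K).

Definition coef (K : fieldType) (x : vec K) (c : int) : K :=
  \sum_(p <- x | p.1 == c) p.2.

Definition veq (K : fieldType) (x y : vec K) : Prop :=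
  forall c : int, coef x c = coef y c.

Definition vadd (K : fieldType) (x y : vec K) : vec K := x ++ y.

Definition vscale (K : fieldType) (k : K) (x : vec K) : vec K :=
  [seq (p.1, k * p.2) | p <- x].

Definition basis (K : fieldType) (a : int) : vec K := [:: (a, 1)].

Definition vmul (K : fieldType) (f : int -> int -> K) (t : int)
    (x y : vec K) : vec K :=
  [seq (p.1 + q.1 + t, f p.1 q.1 * p.2 * q.2) | p <- x, q <- y].

Definition zodd (a : int) : bool := ~~ (2 %| a)%Z.
Definition zeven (a : int) : bool := (2 %| a)%Z.

Definition periodic2 (K : fieldType) (f : int -> int -> K) : Prop :=
  forall a b a' b' : int, zodd a = zodd a' -> zodd b = zodd b' ->
    f a b = f a' b'.

Definition leibniz (K : fieldType) (f : int -> int -> K) (t : int) : Prop :=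
  forall x y z : vec K,
    veq (vmul f t x (vmul f t y z))
        (vadd (vmul f t (vmul f t x y) z)
              (vscale (-1) (vmul f t (vmul f t x z) y))).

Definition alg_iso (K : fieldType) (f : int -> int -> K) (t : int)
    (g : int -> int -> K) (s : int) : Prop :=
  exists phi : vec K -> vec K,
    [/\ forall x y, veq x y -> veq (phi x) (phi y),
        forall x y, veq (phi (vadd x y)) (vadd (phi x) (phi y)),
        forall (k : K) x, veq (phi (vscale k x)) (vscale k (phi x)),
        forall x y, veq (phi (vmul f t x y)) (vmul g s (phi x) (phi y)) &
        (forall x y, veq (phi x) (phi y) -> veq x y) /\
        (forall y, exists x, veq (phi x) y)].

Definition f01 (K : fieldType) (alpha : K) (a b : int) : K :=
  if zodd a && zeven b then alpha else 0.
Definition f02 (K : fieldType) (a b : int) : K :=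
  if zeven a && zodd b then -1 else if zodd a && zeven b then 1 else 0.
Definition f03 (K : fieldType) (a b : int) : K :=
  if zodd a && zodd b then 1 else 0.
Definition f11 (K : fieldType) (alpha : K) (a b : int) : K :=
  if zeven a && zodd b then alpha else 0.
Definition f12 (K : fieldType) (a b : int) : K := f02 K a b.
Definition f13 (K : fieldType) (a b : int) : K :=
  if zeven a && zeven b then 1 else 0.

From HB Require Import structures.
From mathcomp Require Import all_boot all_order all_algebra.
From mathcomp Require Import zify ring.
Set Implicit Arguments. Unset Strict Implicit. Unset Printing Implicit Defensive.
Import GRing.Theory.
Local Open Scope ring_scope.

(* A periodic structure function f is a 2x2 parity table of four constants
   (its values on (even,even), (even,odd), (odd,even), (odd,odd)).  Scaling
   every vector by a nonzero l is an isomorphism L(l*g,t) ~ L(g,t), so it is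
   enough to show that f is PROPORTIONAL to one of the model functions.
   The Leibniz identity on basis vectors e_p, e_q, e_r gives polynomial
   relations between the four constants; for even t four of them already
   force f into one of four shapes (f01 0, f01 1, f02, f03 up to a scalar).
   The odd case reduces to the even one through the relabelling
   e_a |-> e_{a+1}: the table f(a+1,b+1) is again periodic and satisfies
   the basis Leibniz identity with parameter t+1, which is even, and
   relabelling back turns the even models into the odd ones. *)

Lemma zevenD (a b : int) : zeven (a + b) = (zeven a == zeven b).
Proof. by rewrite /zeven; case: (boolP (2 %| a)%Z); case: (boolP (2 %| b)%Z); lia. Qed.

Lemma zeven0 : zeven 0 = true. Proof. by []. Qed.
Lemma zeven1 : zeven 1 = false. Proof. by []. Qed.

Lemma zevenB1 (a : int) : zeven (a - 1) = ~~ zeven a.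
Proof. by rewrite zevenD; case: (zeven a). Qed.

Section Classification.
Variable K : fieldType.
Implicit Types (f g h : int -> int -> K) (x y : vec K) (t : int).

Definition basis_identity f t : Prop := forall p q r : int,
  f q r * f p (q + r + t) = f p q * f (p + q + t) r - f p r * f (p + r + t) q.

Definition proportional f g : Prop :=
  exists2 l : K, l != 0 & forall a b, f a b = l * g a b.

Lemma proportional_trans f g h :
  proportional f g -> proportional g h -> proportional f h.
Proof.
move=> [l l0 fg] [m m0 gh]; exists (l * m); first by rewrite mulf_neq0.
by move=> a b; rewrite fg gh mulrA.
Qed.

Lemma coef_nil c : coef ([::] : vec K) c = 0.
Proof. by rewrite /coef big_nil. Qed.

Lemma coef_cons (i : int) (k : K) x c :
  coef ((i, k) :: x) c = (if i == c then k else 0) + coef x c.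
Proof. by rewrite /coef big_cons /=; case: (i == c); rewrite ?add0r. Qed.

Lemma coef_scale (k : K) x c : coef (vscale k x) c = k * coef x c.
Proof.
elim: x => [|[i a] x IH]; first by rewrite coef_nil mulr0.
rewrite /= coef_cons -/(vscale k x) IH coef_cons mulrDr.
by case: (i == c); rewrite ?mulr0.
Qed.

Lemma vmul_scale f g t (l : K) x y : (forall a b, f a b = l * g a b) ->
  vscale l (vmul f t x y) = vmul g t (vscale l x) (vscale l y).
Proof.
move=> fg; elim: x => [|p x IH] //=.
rewrite /vmul /= -/(vmul f t x y) -/(vmul g t (vscale l x) (vscale l y)) -IH.
rewrite /vscale map_cat -!map_comp; congr (_ ++ _).
by apply: eq_map => q /=; rewrite fg; congr pair; ring.
Qed.

Lemma alg_iso_proportional f g t : proportional f g -> alg_iso f t g t.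
Proof.
move=> [l l0 fg]; exists (vscale l); split.
- by move=> x y E c; rewrite !coef_scale E.
- by move=> x y c; rewrite /vadd /vscale map_cat.
- by move=> k x c; rewrite !coef_scale mulrCA.
- by move=> x y c; rewrite (vmul_scale t x y fg).
split.
- by move=> x y E c; have := E c; rewrite !coef_scale => /(mulfI l0).
- move=> y; exists (vscale l^-1 y) => c.
  by rewrite !coef_scale mulrA mulfV // mul1r.
Qed.

(* A Leibniz algebra satisfies the identity on basis vectors: compare the
   coefficients of e_{p+q+r+2t} in e_p(e_q e_r) = (e_p e_q)e_r - (e_p e_r)e_q. *)
Lemma leibniz_basis f t : leibniz f t -> basis_identity f t.
Proof.
move=> fL p q r; have := fL (basis K p) (basis K q) (basis K r) (p + q + r + t + t).
rewrite /vmul /basis /vadd /vscale /= !coef_cons coef_nil.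
have -> : p + (q + r + t) + t = p + q + r + t + t by ring.
have -> : p + q + t + r + t = p + q + r + t + t by ring.
have -> : p + r + t + q + t = p + q + r + t + t by ring.
by rewrite eqxx !addr0 !mulr1 mulrC => ->; ring.
Qed.

Definition ptable (A B C D : K) (a b : int) : K :=
  if zeven a then (if zeven b then A else B) else (if zeven b then C else D).

Lemma periodic_ptable f : periodic2 f ->
  exists A B C D, forall a b, f a b = ptable A B C D a b.
Proof.
move=> fP; exists (f 0 0), (f 0 1), (f 1 0), (f 1 1) => a b; rewrite /ptable.
by case: (boolP (zeven a)) => Ha; case: (boolP (zeven b)) => Hb;
  apply: fP; rewrite /zodd -/(zeven _) ?Ha ?Hb.
Qed.

Lemma proportional_ptable f g (l A B C D A' B' C' D' : K) :
  (forall a b, f a b = ptable A B C D a b) ->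
  (forall a b, g a b = ptable A' B' C' D' a b) -> l != 0 ->
  [/\ A = l * A', B = l * B', C = l * C' & D = l * D'] -> proportional f g.
Proof.
move=> fT gT l0 [eA eB eC eD]; exists l => // a b; rewrite fT gT /ptable.
by case: (zeven a); case: (zeven b).
Qed.

Lemma f01_ptable (alpha : K) a b : f01 alpha a b = ptable 0 0 alpha 0 a b.
Proof. by rewrite /f01 /ptable /zodd -!/(zeven _); case: (zeven a); case: (zeven b). Qed.

Lemma f02_ptable a b : f02 K a b = ptable 0 (-1) 1 0 a b.
Proof. by rewrite /f02 /ptable /zodd -!/(zeven _); case: (zeven a); case: (zeven b). Qed.

Lemma f03_ptable a b : f03 K a b = ptable 0 0 0 1 a b.
Proof. by rewrite /f03 /ptable /zodd -!/(zeven _); case: (zeven a); case: (zeven b). Qed.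

(* The relations between the table entries that hold for even t (obtained
   from the basis identity at (0,0,0), (1,1,1), (0,0,1), (1,0,1)) leave
   exactly the four normal forms. *)
Lemma even_table_classification f (A B C D : K) :
  (forall a b, f a b = ptable A B C D a b) ->
  A = 0 -> D * C = 0 -> B * (B + C) = 0 -> B * D = C * D ->
  [\/ proportional f (f01 0), proportional f (f01 1),
      proportional f (@f02 K) | proportional f (@f03 K)].
Proof.
move=> fT A0 DC0 BBC0 BDCD.
have [D0|D_neq0] := eqVneq D 0.
- have [B0|B_neq0] := eqVneq B 0.
  + have [C0|C_neq0] := eqVneq C 0.
    * apply: Or41; apply: (proportional_ptable (l := 1) fT (f01_ptable 0)).
        exact: oner_neq0.
      by rewrite A0 B0 C0 D0 !mulr0.
    * apply: Or42; apply: (proportional_ptable fT (f01_ptable 1) C_neq0).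
      by rewrite A0 B0 D0 !mulr0 mulr1.
  + move/eqP: BBC0; rewrite mulf_eq0 (negPf B_neq0) addr_eq0 => /eqP B_oppC.
    have C_neq0 : C != 0 by apply: contraNneq B_neq0; rewrite B_oppC => ->; rewrite oppr0.
    apply: Or43; apply: (proportional_ptable fT f02_ptable C_neq0).
    by rewrite A0 B_oppC D0 !mulr0 mulr1 mulrN1.
- have C0 : C = 0 by apply/eqP; move/eqP: DC0; rewrite mulf_eq0 (negPf D_neq0).
  have B0 : B = 0 by apply/eqP; move/eqP: BDCD; rewrite C0 mul0r mulf_eq0 (negPf D_neq0) orbF.
  apply: Or44; apply: (proportional_ptable fT f03_ptable D_neq0).
  by rewrite A0 B0 C0 !mulr0 mulr1.
Qed.

(* Normal form for even t: every table entry index p+q+t has the parity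
   of p+q, so four basis identities yield the relations above. *)
Lemma even_normal_form f t : periodic2 f -> basis_identity f t -> zeven t ->
  [\/ proportional f (f01 0), proportional f (f01 1),
      proportional f (@f02 K) | proportional f (@f03 K)].
Proof.
move=> fP fB tE; have [A [B [C [D fT]]]] := periodic_ptable fP.
have E000 := fB 0 0 0; have E111 := fB 1 1 1.
have E001 := fB 0 0 1; have E101 := fB 1 0 1.
rewrite !fT /ptable !zevenD zeven0 zeven1 tE /= in E000 E111 E001 E101.
have A0 : A = 0 by move/eqP: E000; rewrite subrr mulf_eq0 orbb => /eqP.
apply: (even_table_classification fT A0).
- by rewrite E111 subrr.
- by rewrite mulrDr E001 A0 mul0r add0r addrC subrr.
- by rewrite E101 A0 mulr0 subr0.
Qed.

(* The relabelling e_a |-> e_{a+1}: L(f,t) ~ L(shift f, t+1). *)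
Definition shift f (a b : int) : K := f (a + 1) (b + 1).

Lemma periodic_shift f : periodic2 f -> periodic2 (shift f).
Proof.
move=> fP a b a' b' Ea Eb; apply: fP; rewrite /zodd -!/(zeven _) !zevenD zeven1.
  by move: Ea; rewrite /zodd -!/(zeven _) => /negb_inj ->.
by move: Eb; rewrite /zodd -!/(zeven _) => /negb_inj ->.
Qed.

Lemma basis_identity_shift f t : basis_identity f t -> basis_identity (shift f) (t + 1).
Proof.
move=> fB p q r; have := fB (p + 1) (q + 1) (r + 1); rewrite /shift.
have -> : q + 1 + (r + 1) + t = q + r + (t + 1) + 1 by ring.
have -> : p + 1 + (q + 1) + t = p + q + (t + 1) + 1 by ring.
by have -> : p + 1 + (r + 1) + t = p + r + (t + 1) + 1 by ring.
Qed.

Lemma proportional_unshift f g :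
  proportional (shift f) g -> proportional f (fun a b => g (a - 1) (b - 1)).
Proof. by move=> [l l0 fg]; exists l => // a b; rewrite -fg /shift !subrK. Qed.

Lemma f01_unshift (alpha : K) :
  proportional (fun a b => f01 alpha (a - 1) (b - 1)) (f11 alpha).
Proof.
exists 1 => [|a b]; first exact: oner_neq0.
rewrite mul1r /f01 /f11 /zodd -!/(zeven _) !zevenB1.
by case: (zeven a); case: (zeven b).
Qed.

Lemma f02_unshift : proportional (fun a b => f02 K (a - 1) (b - 1)) (@f12 K).
Proof.
exists (-1) => [|a b]; first by rewrite oppr_eq0 oner_neq0.
rewrite /f12 /f02 /zodd -!/(zeven _) !zevenB1.
by case: (zeven a); case: (zeven b); rewrite /= ?mulr0 ?mulN1r ?opprK.
Qed.

Lemma f03_unshift : proportional (fun a b => f03 K (a - 1) (b - 1)) (@f13 K).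
Proof.
exists 1 => [|a b]; first exact: oner_neq0.
rewrite mul1r /f03 /f13 /zodd -!/(zeven _) !zevenB1.
by case: (zeven a); case: (zeven b).
Qed.

Lemma odd_normal_form f t : periodic2 f -> basis_identity f t -> zodd t ->
  [\/ proportional f (f11 0), proportional f (f11 1),
      proportional f (@f12 K) | proportional f (@f13 K)].
Proof.
move=> fP fB tO.
have tE : zeven (t + 1) by rewrite zevenD zeven1; move: tO; rewrite /zodd -/(zeven t); case: zeven.
case: (even_normal_form (periodic_shift fP) (basis_identity_shift fB) tE)
  => /proportional_unshift fF.
- by apply: Or41; apply: proportional_trans fF (f01_unshift 0).
- by apply: Or42; apply: proportional_trans fF (f01_unshift 1).
- by apply: Or43; apply: proportional_trans fF f02_unshift.
- by apply: Or44; apply: proportional_trans fF f03_unshift.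
Qed.

End Classification.

Theorem mainTheorem8 (K : fieldType) (f : int -> int -> K) (t : int) :
  periodic2 f -> leibniz f t ->
  (zeven t ->
     [\/ alg_iso f t (f01 0) t, alg_iso f t (f01 1) t,
         alg_iso f t (@f02 K) t | alg_iso f t (@f03 K) t]) /\
  (zodd t ->
     [\/ alg_iso f t (f11 0) t, alg_iso f t (f11 1) t,
         alg_iso f t (@f12 K) t | alg_iso f t (@f13 K) t]).
Proof.
move=> fP /leibniz_basis fB; split=> [tE | tO].
- by case: (even_normal_form fP fB tE) => /(alg_iso_proportional t);
    [apply: Or41 | apply: Or42 | apply: Or43 | apply: Or44].
- by case: (odd_normal_form fP fB tO) => /(alg_iso_proportional t);
    [apply: Or41 | apply: Or42 | apply: Or43 | apply: Or44].
Qed.
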